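(* Consider the delay differential system \[ \begin{aligned} \dot T(t)&= s-dT(t)+aT(t)\Big(1-\frac{T(t)+I(t)}{T_{\max}}\Big)-\frac{bT(t)V(t)}{1+\alpha V(t)},\\ \dot I(t)&= \frac{bT(t-\tau)V(t-\tau)}{1+\alpha V(t-\tau)}+aI(t)\Big(1-\frac{T(t)+I(t)}{T_{\max}}\Big)-\mu I(t),\\ \dot V(t)&= pI(t)-cV(t), \end{aligned} \] with positive constants $s,d,a,T_{\max},b,\alpha,\mu,p,c$ satisfying $d\le\mu$, and $\tau\ge0$. Let \[ T_0=\frac{T_{\max}}{2a}\Big(a-d+\sqrt{(a-d)^2+\tfrac{4as}{T_{\max}}}\Big),\qquad R_0=\frac{1}{\mu}\Big[\frac{bpT_0}{c}+a\Big(1-\frac{T_0}{T_{\max}}\Big)\Big]. \] If $R_0>1$, then the system is permanent.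
   Context: The system is permanent if it is dissipative (all solutions with positive initial data are ultimately bounded by a constant independent of the initial data) and uniformly persistent: there is $\eta>0$, independent of the initial data, such that every solution with positive continuous initial data on $[-\tau,0]$ satisfies $\liminf_{t\to\infty}T(t)\ge\eta$, $\liminf_{t\to\infty}I(t)\ge\eta$, $\liminf_{t\to\infty}V(t)\ge\eta$. *)

From Stdlib Require Import Reals Lra.
Open Scope R_scope.

Definition cont_on_from (tau : R) (f : R -> R) : Prop :=
  forall t, -tau <= t ->
    forall eps, 0 < eps -> exists delta, 0 < delta /\
      forall x, -tau <= x -> Rabs (x - t) < delta -> Rabs (f x - f t) < eps.

Definition cont_on_init (tau : R) (f : R -> R) : Prop :=
  forall t, -tau <= t <= 0 ->
    forall eps, 0 < eps -> exists delta, 0 < delta /\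
      forall x, -tau <= x <= 0 -> Rabs (x - t) < delta -> Rabs (f x - f t) < eps.

Definition is_solution (s d a Tmax b alpha mu p c tau : R)
    (T I V : R -> R) : Prop :=
  cont_on_from tau T /\ cont_on_from tau I /\ cont_on_from tau V /\
  forall t, 0 < t ->
    derivable_pt_lim T t
      (s - d * T t + a * T t * (1 - (T t + I t) / Tmax)
         - b * T t * V t / (1 + alpha * V t)) /\
    derivable_pt_lim I t
      (b * T (t - tau) * V (t - tau) / (1 + alpha * V (t - tau))
         + a * I t * (1 - (T t + I t) / Tmax) - mu * I t) /\
    derivable_pt_lim V t (p * I t - c * V t).

Definition positive_initial_data (tau : R) (T I V : R -> R) : Prop :=
  cont_on_init tau T /\ cont_on_init tau I /\ cont_on_init tau V /\
  forall th, -tau <= th <= 0 -> 0 < T th /\ 0 < I th /\ 0 < V th.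

Definition T0 (s d a Tmax : R) : R :=
  Tmax / (2 * a) * (a - d + sqrt ((a - d) ^ 2 + 4 * a * s / Tmax)).

Definition basic_repr_R0 (s d a Tmax b mu p c : R) : R :=
  / mu * (b * p * T0 s d a Tmax / c + a * (1 - T0 s d a Tmax / Tmax)).

Definition liminf_ge (f : R -> R) (eta : R) : Prop :=
  forall eps, 0 < eps -> exists t0, forall t, t0 <= t -> eta - eps < f t.

(* Permanence: dissipative + uniformly persistent, with constants
   independent of the initial data. *)
Definition permanent (s d a Tmax b alpha mu p c tau : R) : Prop :=
  exists M eta, 0 < eta /\
    forall T I V : R -> R,
      positive_initial_data tau T I V ->
      is_solution s d a Tmax b alpha mu p c tau T I V ->
      (exists t0, forall t, t0 <= t -> T t <= M /\ I t <= M /\ V t <= M) /\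
      liminf_ge T eta /\ liminf_ge I eta /\ liminf_ge V eta.

From Stdlib Require Import Reals Lra Classical.
Open Scope R_scope.

(* Dissipativity: the logistic term caps T + I, so T, I and V eventually lie below explicit
   bounds.  Persistence of I: fix h small.  While I < h, T settles within O(h) of the
   infection-free equilibrium T0 and V = O(h), so (I, V) dominates a linear delay system
   whose characteristic equation has a positive root because R0 > 1.  Comparison with the
   corresponding exponential solution shows that I cannot stay below h on a window whose
   length depends only on the value of I at its start; hence I only dips below h for a
   bounded time, at a bounded decay rate.  Lower bounds for T and V then follow from
   T' >= s - K T and V' = p I - c V. *)

Lemma continuity_pt_of_derivable_pt_lim f x l :
  derivable_pt_lim f x l -> continuity_pt f x.
Proof. intro H. apply derivable_continuous_pt. exists l. exact H. Qed.

Lemma exp_le_compat x y : x <= y -> exp x <= exp y.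
Proof. intros [H|H]; [left; apply exp_increasing, H|subst; lra]. Qed.

Lemma derivable_pt_lim_exp_shift u l t0 t :
  derivable_pt_lim (fun t => u * exp (l * (t - t0))) t (l * (u * exp (l * (t - t0)))).
Proof.
  replace (l * (u * exp (l * (t - t0))))
    with (0 * exp (l * (t - t0)) + u * (exp (l * (t - t0)) * l)) by ring.
  apply (derivable_pt_lim_mult (fun _ => u) (fun t => exp (l * (t - t0))));
    [apply derivable_pt_lim_const|].
  apply (derivable_pt_lim_comp (fun t => l * (t - t0)) exp t l (exp (l * (t - t0))));
    [|apply derivable_pt_lim_exp].
  replace l with (0 * (t - t0) + l * (1 - 0)) at 1 by ring.
  apply (derivable_pt_lim_mult (fun _ => l) (fun t => t - t0));
    [apply derivable_pt_lim_const|].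
  apply (derivable_pt_lim_minus (fun t => t) (fun _ => t0));
    [apply derivable_pt_lim_id|apply derivable_pt_lim_const].
Qed.

(* The weight [exp (K (t - a))] turns [F' >= -K (F - q)] into monotonicity. *)
Lemma gronwall_lower F dF K q a b : a <= b ->
  (forall t, a <= t <= b -> derivable_pt_lim F t (dF t)) ->
  (forall t, a < t < b -> - K * (F t - q) <= dF t) ->
  (F a - q) * exp (- K * (b - a)) <= F b - q.
Proof.
  intros Hab Hd Hineq.
  destruct (Req_dec a b) as [<-|Hne].
  { replace (- K * (a - a)) with 0 by ring. rewrite exp_0. lra. }
  set (G := fun t => (F t - q) * (1 * exp (K * (t - a)))).
  assert (HG : forall t, a <= t <= b -> derivable_pt_lim G t
            (dF t * (1 * exp (K * (t - a))) + (F t - q) * (K * (1 * exp (K * (t - a)))))).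
  { intros t Ht. apply (derivable_pt_lim_mult (fun t => F t - q) (fun t => 1 * exp (K * (t - a)))).
    - replace (dF t) with (dF t - 0) by ring.
      apply (derivable_pt_lim_minus F (fun _ => q)); [apply Hd; lra|apply derivable_pt_lim_const].
    - apply derivable_pt_lim_exp_shift. }
  destruct (MVT_cor2 G _ a b ltac:(lra) HG) as [c0 [Heq Hc0]].
  assert (Hmono : G a <= G b).
  { assert (E := exp_pos (K * (c0 - a))). specialize (Hineq c0 Hc0).
    assert (0 <= (dF c0 + K * (F c0 - q)) * (1 * exp (K * (c0 - a)))) by
      (apply Rmult_le_pos; lra).
    nra. }
  unfold G in Hmono. rewrite Rminus_diag, Rmult_0_r, exp_0, !Rmult_1_l, Rmult_1_r in Hmono.
  assert (Hinv : exp (K * (b - a)) * exp (- K * (b - a)) = 1).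
  { rewrite <- exp_plus. replace (K * (b - a) + - K * (b - a)) with 0 by ring. apply exp_0. }
  assert (E := exp_pos (- K * (b - a))).
  apply (Rmult_le_compat_r (exp (- K * (b - a)))) in Hmono; [|lra].
  rewrite Rmult_assoc, Hinv, Rmult_1_r in Hmono. exact Hmono.
Qed.

Lemma gronwall_upper F dF K q a b : a <= b ->
  (forall t, a <= t <= b -> derivable_pt_lim F t (dF t)) ->
  (forall t, a < t < b -> dF t <= - K * (F t - q)) ->
  F b - q <= (F a - q) * exp (- K * (b - a)).
Proof.
  intros Hab Hd Hineq.
  assert (H := gronwall_lower (fun t => - F t) (fun t => - dF t) K (- q) a b Hab).
  assert (- F a - - q = - (F a - q)) by ring.
  enough ((- F a - - q) * exp (- K * (b - a)) <= - F b - - q) by nra.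
  apply H.
  - intros t Ht. apply derivable_pt_lim_opp, Hd, Ht.
  - intros t Ht. specialize (Hineq t Ht). lra.
Qed.

Lemma gronwall_pos F dF K a b : a <= b ->
  (forall t, a <= t <= b -> derivable_pt_lim F t (dF t)) ->
  (forall t, a < t < b -> - K * F t <= dF t) ->
  0 < F a -> 0 < F b.
Proof.
  intros Hab Hd Hineq Ha.
  assert (H := gronwall_lower F dF K 0 a b Hab Hd).
  assert (E := exp_pos (- K * (b - a))).
  enough ((F a - 0) * exp (- K * (b - a)) <= F b - 0) by nra.
  apply H. intros t Ht. rewrite Rminus_0_r. apply Hineq, Ht.
Qed.

Definition decay_time X eps k := Rabs X / (k * eps).

Lemma decay_time_nonneg X eps k : 0 < eps -> 0 < k -> 0 <= decay_time X eps k.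
Proof.
  intros He Hk. unfold decay_time.
  apply Rmult_le_pos; [apply Rabs_pos|left; apply Rinv_0_lt_compat; nra].
Qed.

(* Suffices because [exp (k t) >= k t]. *)
Lemma decay_time_spec X eps k : 0 < eps -> 0 < k ->
  forall t, decay_time X eps k <= t -> X * exp (- k * t) <= eps.
Proof.
  intros He Hk t Ht. unfold decay_time in Ht.
  assert (HX : Rabs X <= k * eps * t).
  { apply (Rmult_le_compat_l (k * eps)) in Ht; [|nra].
    replace (k * eps * (Rabs X / (k * eps))) with (Rabs X) in Ht by (field; lra). lra. }
  assert (Hinv : exp (- k * t) * exp (k * t) = 1).
  { rewrite <- exp_plus. replace (- k * t + k * t) with 0 by ring. apply exp_0. }
  assert (HXe : X <= eps * exp (k * t)).
  { assert (E1 := exp_ineq1_le (k * t)). assert (E2 := RRle_abs X). nra. }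
  apply (Rmult_le_compat_r (exp (- k * t))) in HXe; [|left; apply exp_pos].
  rewrite Rmult_assoc, (Rmult_comm (exp (k * t))), Hinv, Rmult_1_r in HXe. exact HXe.
Qed.

Lemma le_after_decay_time F dF K q X eps t0 t : 0 < K -> 0 < eps ->
  (forall w, t0 <= w <= t -> derivable_pt_lim F w (dF w)) ->
  (forall w, t0 < w < t -> dF w <= - K * (F w - q)) ->
  F t0 - q <= X -> t0 + decay_time X eps K <= t -> F t <= q + eps.
Proof.
  intros HK He Hd Hi HX Ht.
  assert (HD := decay_time_nonneg X eps K He HK).
  assert (G := gronwall_upper F dF K q t0 t ltac:(lra) Hd Hi).
  assert (Hs := decay_time_spec X eps K He HK (t - t0) ltac:(lra)).
  assert ((F t0 - q) * exp (- K * (t - t0)) <= X * exp (- K * (t - t0)))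
    by (apply Rmult_le_compat_r; [left; apply exp_pos|exact HX]).
  lra.
Qed.

Lemma eventually_le_of_decay F dF K q eps t0 : 0 < K -> 0 < eps ->
  (forall w, t0 <= w -> derivable_pt_lim F w (dF w)) ->
  (forall w, t0 < w -> dF w <= - K * (F w - q)) ->
  exists t1, t0 <= t1 /\ forall t, t1 <= t -> F t <= q + eps.
Proof.
  intros HK He Hd Hi. exists (t0 + decay_time (F t0 - q) eps K).
  assert (HD := decay_time_nonneg (F t0 - q) eps K He HK). split; [lra|].
  intros t Ht. apply (le_after_decay_time F dF K q (F t0 - q) eps t0 t HK He); try lra.
  - intros w Hw. apply Hd. lra.
  - intros w Hw. apply Hi. lra.
Qed.

Lemma ge_after_unit_time F dF K q t0 t : 0 <= K -> 0 <= q -> 0 <= F t0 ->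
  (forall w, t0 <= w <= t -> derivable_pt_lim F w (dF w)) ->
  (forall w, t0 < w < t -> - K * (F w - q) <= dF w) ->
  t0 + 1 <= t -> q * (1 - exp (- K)) <= F t.
Proof.
  intros HK Hq HF Hd Hi Ht.
  assert (G := gronwall_lower F dF K q t0 t ltac:(lra) Hd Hi).
  assert (E1 : exp (- K * (t - t0)) <= exp (- K)) by (apply exp_le_compat; nra).
  assert (E2 := exp_pos (- K * (t - t0))).
  assert (0 <= F t0 * exp (- K * (t - t0))) by (apply Rmult_le_pos; lra).
  assert (q * exp (- K * (t - t0)) <= q * exp (- K)) by (apply Rmult_le_compat_l; lra).
  nra.
Qed.

Lemma continuity_pt_ball f x : continuity_pt f x -> forall eps, 0 < eps ->
  exists del, 0 < del /\ forall y, Rabs (y - x) < del -> Rabs (f y - f x) < eps.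
Proof.
  intros H eps He. destruct (H eps He) as [del [Hd Hy]]. exists del. split; [exact Hd|].
  intros y Hyx. destruct (Req_dec x y) as [<-|Hxy].
  - rewrite Rminus_diag, Rabs_R0. exact He.
  - apply (Hy y). split; [split; [constructor|exact Hxy]|exact Hyx].
Qed.

Lemma continuity_pt_Rmin f g x : continuity_pt f x -> continuity_pt g x ->
  continuity_pt (fun u => Rmin (f u) (g u)) x.
Proof.
  intros Hf Hg.
  apply continuity_pt_locally_ext with (f := fun u => (f u + g u - Rabs (f u - g u)) / 2)
    (a := 1); [lra| |].
  - intros u _. unfold Rmin. destruct (Rle_dec (f u) (g u)).
    + rewrite Rabs_left1 by lra. field.
    + rewrite Rabs_right by lra. field.
  - apply continuity_pt_mult; [|apply continuity_pt_const; intros u v; reflexivity].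
    apply continuity_pt_minus; [apply continuity_pt_plus; assumption|].
    apply (continuity_pt_comp (fun u => f u - g u) Rabs);
      [apply continuity_pt_minus; assumption|apply Rcontinuity_abs].
Qed.

(* [s] is the supremum of the times up to which [phi] stays positive. *)
Lemma first_nonpos_time (phi : R -> R) a b : a < b ->
  (forall t, a <= t <= b -> continuity_pt phi t) -> 0 < phi a -> phi b <= 0 ->
  exists s, a < s <= b /\ phi s <= 0 /\ forall u, a <= u < s -> 0 < phi u.
Proof.
  intros Hab Hc Ha Hb.
  set (E := fun x => a <= x <= b /\ forall u, a <= u <= x -> 0 < phi u).
  assert (Ea : E a) by (split; [lra|intros u Hu; replace u with a by lra; exact Ha]).
  destruct (completeness E) as [s [Hub Hlub]].
  { exists b. intros x [Hx _]. lra. }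
  { exists a. exact Ea. }
  assert (Has : a <= s) by (apply Hub, Ea).
  assert (Hsb : s <= b) by (apply Hlub; intros x [Hx _]; lra).
  assert (Hbelow : forall u, a <= u < s -> 0 < phi u).
  { intros u Hu. destruct (classic (exists x, E x /\ u < x)) as [[x [[_ Hx] Hux]]|Hn].
    - apply Hx. lra.
    - exfalso. enough (s <= u) by lra. apply Hlub. intros x Ex.
      destruct (Rle_dec x u) as [|Hxu]; [assumption|].
      exfalso. apply Hn. exists x. split; [exact Ex|lra]. }
  assert (Hs : phi s <= 0).
  { destruct (Rle_dec (phi s) 0) as [|Hp]; [assumption|]. exfalso. apply Rnot_le_lt in Hp.
    destruct (continuity_pt_ball phi s (Hc s ltac:(lra)) (phi s) Hp) as [del [Hdel Hy]].
    assert (Hnear : forall y, Rabs (y - s) < del -> 0 < phi y).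
    { intros y Hys. specialize (Hy y Hys). apply Rabs_def2 in Hy. lra. }
    destruct (Req_dec s b) as [->|Hsb']; [lra|].
    set (x := Rmin (s + del / 2) b).
    assert (Hx : s < x <= s + del / 2) by (unfold x; apply Rmin_case_strong; intros; lra).
    enough (E x) by (assert (x <= s) by (apply Hub; assumption); lra).
    split; [unfold x in *; split; [lra|apply Rmin_r]|].
    intros u Hu. destruct (Rlt_dec u s); [apply Hbelow; lra|].
    apply Hnear, Rabs_def1; lra. }
  exists s. split; [|split; assumption]. split; [|exact Hsb].
  destruct (Req_dec a s) as [<-|]; lra.
Qed.

Lemma last_time_above (x : R -> R) a b B : a < b ->
  (forall t, a <= t <= b -> continuity_pt x t) -> B <= x a -> x b < B ->
  exists s, a <= s < b /\ B <= x s /\ forall u, s < u <= b -> x u < B.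
Proof.
  intros Hab Hc Ha Hb.
  set (phi := fun w => B - x (a + b - w)).
  destruct (first_nonpos_time phi a b Hab) as [s [Hs1 [Hs2 Hs3]]].
  - intros t Ht. unfold phi.
    apply continuity_pt_minus; [apply continuity_pt_const; intros u v; reflexivity|].
    apply (continuity_pt_comp (fun w => a + b - w) x); [|apply Hc; lra].
    apply continuity_pt_minus; [apply continuity_pt_const; intros u v; reflexivity|].
    apply derivable_continuous_pt, derivable_pt_id.
  - unfold phi. replace (a + b - a) with b by ring. lra.
  - unfold phi. replace (a + b - b) with a by ring. lra.
  - exists (a + b - s). unfold phi in Hs2. split; [lra|split; [lra|]].
    intros u Hu. specialize (Hs3 (a + b - u) ltac:(lra)). unfold phi in Hs3.
    replace (a + b - (a + b - u)) with u in Hs3 by ring. lra.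
Qed.

Lemma pos_by_continuous_induction (phi : R -> R) a b :
  (forall t, a <= t <= b -> continuity_pt phi t) -> 0 < phi a ->
  (forall s, a < s <= b -> (forall u, a <= u < s -> 0 < phi u) -> 0 < phi s) ->
  forall t, a <= t <= b -> 0 < phi t.
Proof.
  intros Hc Ha Hstep t Ht.
  destruct (Req_dec t a) as [->|Hne]; [exact Ha|].
  apply Rnot_le_lt. intro Hneg.
  destruct (first_nonpos_time phi a t ltac:(lra)) as [s [Hs [Hps Hbef]]];
    [intros; apply Hc; lra|exact Ha|exact Hneg|].
  assert (0 < phi s) by (apply Hstep; [lra|exact Hbef]). lra.
Qed.

Lemma barrier_or_linear_growth x dx t1 e B k : 0 < k ->
  (forall t, t1 <= t <= e -> derivable_pt_lim x t (dx t)) ->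
  (forall t, t1 < t <= e -> x t <= B -> k <= dx t) ->
  forall t, t1 <= t <= e -> B <= x t \/ x t1 + k * (t - t1) <= x t.
Proof.
  intros Hk Hd Hb t Ht.
  destruct (Req_dec t t1) as [->|Hne]; [right; lra|].
  destruct (Rle_dec B (x t)) as [|Hlt]; [left; assumption|]. apply Rnot_le_lt in Hlt.
  assert (Hc : forall u, t1 <= u <= t -> continuity_pt x u).
  { intros u Hu. apply (continuity_pt_of_derivable_pt_lim _ _ (dx u)), Hd. lra. }
  destruct (classic (exists u, t1 <= u <= t /\ B <= x u)) as [[u [Hu Hxu]]|Hn].
  - exfalso. destruct (Req_dec u t) as [->|Hut]; [lra|].
    destruct (last_time_above x u t B ltac:(lra) ltac:(intros; apply Hc; lra) Hxu Hlt)
      as [s0 [Hs1 [Hs2 Hs3]]].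
    destruct (MVT_cor2 x dx s0 t ltac:(lra) ltac:(intros; apply Hd; lra)) as [c0 [Heq Hc0]].
    assert (k <= dx c0) by (apply Hb; [lra|left; apply Hs3; lra]).
    nra.
  - right.
    destruct (MVT_cor2 x dx t1 t ltac:(lra) ltac:(intros; apply Hd; lra)) as [c0 [Heq Hc0]].
    assert (k <= dx c0).
    { apply Hb; [lra|]. apply Rnot_lt_le. intro. apply Hn. exists c0. split; lra. }
    nra.
Qed.

Definition char_rate m c K tau := Rmin 1 ((K - m * c) / (m + c + 1 + K * tau)).

(* With [lam <= 1]: [(lam + m) (lam + c) <= lam (m + c + 1) + m c], and
   [1 - lam tau <= exp (- lam tau)]. *)
Lemma char_rate_spec m c K tau : 0 < m -> 0 < c -> m * c < K -> 0 <= tau ->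
  0 < char_rate m c K tau /\
  (char_rate m c K tau + m) * (char_rate m c K tau + c)
    <= K * exp (- char_rate m c K tau * tau).
Proof.
  intros Hm Hc HK Htau.
  assert (0 < m * c) by (apply Rmult_lt_0_compat; assumption).
  assert (HKt : 0 <= K * tau) by (apply Rmult_le_pos; lra).
  assert (Hq : (K - m * c) / (m + c + 1 + K * tau) * (m + c + 1 + K * tau) = K - m * c)
    by (field; lra).
  assert (Hl : 0 < char_rate m c K tau /\ char_rate m c K tau <= 1 /\
               char_rate m c K tau * (m + c + 1 + K * tau) <= K - m * c).
  { unfold char_rate. apply Rmin_case_strong; intro Hle.
    - repeat split; [lra|lra|]. nra.
    - split; [apply Rdiv_lt_0_compat; lra|split; [exact Hle|lra]]. }
  destruct Hl as [Hl0 [Hl1 Hl2]]. split; [exact Hl0|].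
  set (l := char_rate m c K tau) in *.
  assert (E := exp_ineq1_le (- l * tau)).
  assert (K * (1 + - l * tau) <= K * exp (- l * tau)) by (apply Rmult_le_compat_l; lra).
  nra.
Qed.

(* Comparison with the exponential solution [(u, v) exp (lam (t - t0))] of the
   linear delay system [x' = A y (t - tau) - m x], [y' = p x - c y]. *)
Lemma delay_exp_comparison (x y dx dy : R -> R) A m p c tau lam u v t0 t1 :
  0 <= A -> 0 <= p -> 0 <= tau ->
  (forall t, t0 <= t <= t1 -> derivable_pt_lim x t (dx t)) ->
  (forall t, t0 <= t <= t1 -> derivable_pt_lim y t (dy t)) ->
  (forall t, t0 < t < t1 -> A * y (t - tau) - m * x t <= dx t) ->
  (forall t, t0 < t < t1 -> p * x t - c * y t <= dy t) ->
  (forall t, t0 - tau <= t <= t0 -> v * exp (lam * (t - t0)) <= y t) ->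
  (lam + m) * u <= A * v * exp (- lam * tau) ->
  p * u = (lam + c) * v ->
  u < x t0 -> v < y t0 ->
  forall t, t0 <= t <= t1 -> u * exp (lam * (t - t0)) < x t /\ v * exp (lam * (t - t0)) < y t.
Proof.
  intros HA Hp Htau Hdx Hdy Hx Hy Hhist Hchar Huv Hx0 Hy0.
  set (xs := fun w => u * exp (lam * (w - t0))).
  set (ys := fun w => v * exp (lam * (w - t0))).
  set (phi := fun w => Rmin (x w - xs w) (y w - ys w)).
  assert (Hsplit : forall w, 0 < phi w -> xs w < x w /\ ys w < y w)
    by (intro w; unfold phi; apply Rmin_case_strong; intros; lra).
  enough (H : forall t, t0 <= t <= t1 -> 0 < phi t)
    by (intros t Ht; apply Hsplit, H, Ht).
  apply pos_by_continuous_induction.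
  { intros w Hw. apply continuity_pt_Rmin; apply continuity_pt_minus.
    - apply (continuity_pt_of_derivable_pt_lim _ _ (dx w)), Hdx. lra.
    - apply (continuity_pt_of_derivable_pt_lim _ _ _ (derivable_pt_lim_exp_shift u lam t0 w)).
    - apply (continuity_pt_of_derivable_pt_lim _ _ (dy w)), Hdy. lra.
    - apply (continuity_pt_of_derivable_pt_lim _ _ _ (derivable_pt_lim_exp_shift v lam t0 w)). }
  { unfold phi, xs, ys. rewrite Rminus_diag, Rmult_0_r, exp_0, !Rmult_1_r.
    apply Rmin_pos; lra. }
  intros s0 Hs0 Hbef.
  assert (Habove : forall w, t0 <= w < s0 -> xs w < x w /\ ys w < y w)
    by (intros w Hw; apply Hsplit, Hbef, Hw).
  assert (Hxs : 0 < x s0 - xs s0).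
  { apply (gronwall_pos (fun w => x w - xs w) (fun w => dx w - lam * xs w) m t0 s0);
      [lra| |intros w Hw|destruct (Habove t0 ltac:(lra)); lra].
    - intros w Hw. apply derivable_pt_lim_minus; [apply Hdx; lra|].
      apply derivable_pt_lim_exp_shift.
    - assert (Hdelay : ys (w - tau) <= y (w - tau)).
      { destruct (Rle_dec (w - tau) t0); [apply Hhist; lra|left; apply Habove; lra]. }
      specialize (Hx w ltac:(lra)). unfold xs, ys in *.
      replace (lam * (w - tau - t0)) with (- lam * tau + lam * (w - t0)) in Hdelay by ring.
      rewrite exp_plus in Hdelay.
      assert (E := exp_pos (lam * (w - t0))).
      assert ((lam + m) * u * exp (lam * (w - t0))
                <= A * (v * (exp (- lam * tau) * exp (lam * (w - t0))))).
      { apply (Rmult_le_compat_r (exp (lam * (w - t0)))) in Hchar; lra. }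
      assert (A * (v * (exp (- lam * tau) * exp (lam * (w - t0)))) <= A * y (w - tau))
        by (apply Rmult_le_compat_l; lra).
      lra. }
  assert (Hys : 0 < y s0 - ys s0).
  { apply (gronwall_pos (fun w => y w - ys w) (fun w => dy w - lam * ys w) c t0 s0);
      [lra| |intros w Hw|destruct (Habove t0 ltac:(lra)); lra].
    - intros w Hw. apply derivable_pt_lim_minus; [apply Hdy; lra|].
      apply derivable_pt_lim_exp_shift.
    - specialize (Hy w ltac:(lra)). destruct (Habove w ltac:(lra)) as [Hxw _].
      unfold xs, ys in *.
      assert (p * (u * exp (lam * (w - t0))) = (lam + c) * (v * exp (lam * (w - t0))))
        by (rewrite <- Rmult_assoc, Huv; ring).
      assert (p * (u * exp (lam * (w - t0))) <= p * x w) by (apply Rmult_le_compat_l; lra).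
      lra. }
  unfold phi. apply Rmin_pos; assumption.
Qed.

Lemma incidence_nonneg b alpha x v : 0 <= b -> 0 <= alpha -> 0 <= x -> 0 <= v ->
  0 <= b * x * v / (1 + alpha * v).
Proof.
  intros. apply Rmult_le_pos; [apply Rmult_le_pos; [apply Rmult_le_pos|]|]; try assumption.
  left. apply Rinv_0_lt_compat. nra.
Qed.

Lemma incidence_le_mass_action b alpha x v : 0 <= b -> 0 <= alpha -> 0 <= x -> 0 <= v ->
  b * x * v / (1 + alpha * v) <= b * x * v.
Proof.
  intros. assert (0 <= b * x * v) by (apply Rmult_le_pos; [apply Rmult_le_pos|]; assumption).
  assert (0 < 1 + alpha * v) by nra.
  apply (Rmult_le_reg_r (1 + alpha * v)); [assumption|].
  unfold Rdiv. rewrite Rmult_assoc, Rinv_l by lra.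
  assert (0 <= b * x * v * (alpha * v)) by (apply Rmult_le_pos; [|apply Rmult_le_pos]; assumption).
  lra.
Qed.

Lemma incidence_le_saturated b alpha x v : 0 <= b -> 0 < alpha -> 0 <= x -> 0 <= v ->
  b * x * v / (1 + alpha * v) <= b * x / alpha.
Proof.
  intros. assert (0 <= b * x) by (apply Rmult_le_pos; assumption).
  assert (0 < 1 + alpha * v) by nra.
  apply (Rmult_le_reg_r (alpha * (1 + alpha * v))); [nra|].
  replace (b * x * v / (1 + alpha * v) * (alpha * (1 + alpha * v))) with (b * x * (alpha * v))
    by (field; lra).
  replace (b * x / alpha * (alpha * (1 + alpha * v))) with (b * x * (1 + alpha * v))
    by (field; lra).
  apply Rmult_le_compat_l; lra.
Qed.

Lemma incidence_ge_of_le b alpha x v w : 0 <= b -> 0 <= alpha -> 0 <= x -> 0 <= v -> v <= w ->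
  b * x * v / (1 + alpha * w) <= b * x * v / (1 + alpha * v).
Proof.
  intros. assert (0 <= b * x * v) by (apply Rmult_le_pos; [apply Rmult_le_pos|]; assumption).
  apply Rmult_le_compat_l; [assumption|]. apply Rinv_le_contravar; nra.
Qed.

Lemma logistic_le a Tmax x y : 0 < a -> 0 < Tmax -> 0 <= x -> 0 <= y ->
  a * x * (1 - (x + y) / Tmax) <= a * Tmax / 4.
Proof.
  intros Ha HT Hx Hy.
  assert (a * Tmax / 4 - a * x * (1 - (x + y) / Tmax)
          = a / Tmax * ((x - Tmax / 2) ^ 2 + x * y)) by (field; lra).
  assert (0 <= a / Tmax * ((x - Tmax / 2) ^ 2 + x * y)).
  { apply Rmult_le_pos; [left; apply Rdiv_lt_0_compat; assumption|].
    assert (0 <= (x - Tmax / 2) ^ 2) by apply pow2_ge_0. nra. }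
  lra.
Qed.

Lemma liminf_ge_of_eventually f eta eta' : eta' <= eta ->
  (exists t0, forall t, t0 <= t -> eta <= f t) -> liminf_ge f eta'.
Proof.
  intros Hle [t0 Ht0] eps Heps. exists t0. intros t Ht. specialize (Ht0 t Ht). lra.
Qed.

Section Model.

Variables s d a Tmax b alpha mu p c tau : R.
Hypothesis Hs : 0 < s.
Hypothesis Hd : 0 < d.
Hypothesis Ha : 0 < a.
Hypothesis HTmax : 0 < Tmax.
Hypothesis Hb : 0 < b.
Hypothesis Halpha : 0 < alpha.
Hypothesis Hmu : 0 < mu.
Hypothesis Hp : 0 < p.
Hypothesis Hc : 0 < c.
Hypothesis Hdmu : d <= mu.
Hypothesis Htau : 0 <= tau.
Hypothesis HR0 : basic_repr_R0 s d a Tmax b mu p c > 1.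

Local Notation Teq := (T0 s d a Tmax).

Definition T_rhs x y z :=
  s - d * x + a * x * (1 - (x + y) / Tmax) - b * x * z / (1 + alpha * z).
Definition I_rhs x y xd zd :=
  b * xd * zd / (1 + alpha * zd) + a * y * (1 - (x + y) / Tmax) - mu * y.
Definition V_rhs y z := p * y - c * z.

Definition sqrt_disc := sqrt ((a - d) ^ 2 + 4 * a * s / Tmax).

Lemma sqrt_disc_spec :
  sqrt_disc * sqrt_disc = (a - d) ^ 2 + 4 * a * s / Tmax /\
  a - d < sqrt_disc /\ d - a < sqrt_disc.
Proof.
  assert (H4 : 0 < 4 * a * s / Tmax) by (apply Rdiv_lt_0_compat; nra).
  assert (H2 : 0 <= (a - d) ^ 2) by apply pow2_ge_0.
  assert (E := sqrt_sqrt ((a - d) ^ 2 + 4 * a * s / Tmax) ltac:(lra)).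
  assert (P := sqrt_pos ((a - d) ^ 2 + 4 * a * s / Tmax)).
  unfold sqrt_disc. set (S := sqrt ((a - d) ^ 2 + 4 * a * s / Tmax)) in *.
  split; [exact E|]. simpl in E. split; apply Rnot_le_lt; intro; nra.
Qed.

Lemma sqrt_disc_pos : 0 < sqrt_disc.
Proof. destruct sqrt_disc_spec as (_ & H1 & H2). lra. Qed.

Lemma T0_ratio : a * Teq / Tmax = (a - d + sqrt_disc) / 2.
Proof. unfold T0. fold sqrt_disc. field. lra. Qed.

Lemma T0_pos : 0 < Teq.
Proof.
  assert (H := T0_ratio). destruct sqrt_disc_spec as (_ & _ & H2).
  assert (0 < a * Teq / Tmax) by lra.
  apply (Rmult_lt_reg_l (a / Tmax)); [apply Rdiv_lt_0_compat; lra|].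
  replace (a / Tmax * Teq) with (a * Teq / Tmax) by (field; lra). lra.
Qed.

(* [Teq] is the positive root of [s - d x + a x (1 - x / Tmax)], with slope [- sqrt_disc]. *)
Lemma free_T_rhs_expand x :
  s - d * x + a * x * (1 - x / Tmax)
  = - sqrt_disc * (x - Teq) - a / Tmax * (x - Teq) ^ 2.
Proof.
  destruct sqrt_disc_spec as [E _].
  unfold T0. fold sqrt_disc. set (S := sqrt_disc) in *.
  enough (s - d * x + a * x * (1 - x / Tmax) -
    (- S * (x - Tmax / (2 * a) * (a - d + S)) - a / Tmax * (x - Tmax / (2 * a) * (a - d + S)) ^ 2)
    = Tmax / (4 * a) * ((a - d) ^ 2 + 4 * a * s / Tmax - S * S)) by (rewrite E in H; lra).
  field. lra.
Qed.

Lemma T_rhs_le_T0 x y z : 0 <= x -> 0 <= y -> 0 <= z -> T_rhs x y z <= - sqrt_disc * (x - Teq).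
Proof.
  intros Hx Hy Hz. unfold T_rhs.
  assert (Hg := free_T_rhs_expand x).
  assert (a * x * (1 - (x + y) / Tmax) = a * x * (1 - x / Tmax) - a / Tmax * (x * y))
    by (field; lra).
  assert (0 <= a / Tmax * (x * y))
    by (apply Rmult_le_pos; [left; apply Rdiv_lt_0_compat|apply Rmult_le_pos]; lra).
  assert (0 <= a / Tmax * (x - Teq) ^ 2)
    by (apply Rmult_le_pos; [left; apply Rdiv_lt_0_compat; lra|apply pow2_ge_0]).
  assert (Hinc := incidence_nonneg b alpha x z ltac:(lra) ltac:(lra) Hx Hz).
  lra.
Qed.

Lemma T_rhs_le_logistic x y z : 0 <= x -> 0 <= y -> 0 <= z ->
  T_rhs x y z <= - d * (x - (s + a * Tmax / 4) / d).
Proof.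
  intros Hx Hy Hz. unfold T_rhs.
  assert (L := logistic_le a Tmax x y Ha HTmax Hx Hy).
  assert (Hinc := incidence_nonneg b alpha x z ltac:(lra) ltac:(lra) Hx Hz).
  assert (- d * (x - (s + a * Tmax / 4) / d) = s + a * Tmax / 4 - d * x) by (field; lra).
  lra.
Qed.

Lemma T_rhs_ge_linear x y z M N : 0 <= x -> 0 <= y -> 0 <= z -> x + y <= M -> z <= N ->
  s - (d + a * M / Tmax + b * N) * x <= T_rhs x y z.
Proof.
  intros Hx Hy Hz HM HN. unfold T_rhs.
  assert (Hinc := incidence_le_mass_action b alpha x z ltac:(lra) ltac:(lra) Hx Hz).
  assert (a / Tmax * (x * (x + y)) <= a / Tmax * (x * M))
    by (apply Rmult_le_compat_l; [left; apply Rdiv_lt_0_compat; lra|apply Rmult_le_compat_l; lra]).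
  assert (b * x * z <= b * x * N) by (apply Rmult_le_compat_l; [apply Rmult_le_pos|]; lra).
  assert (a * x * (1 - (x + y) / Tmax) = a * x - a / Tmax * (x * (x + y))) by (field; lra).
  assert ((d + a * M / Tmax + b * N) * x = d * x + a / Tmax * (x * M) + b * x * N)
    by (field; lra).
  assert (0 <= a * x) by (apply Rmult_le_pos; lra).
  lra.
Qed.

Lemma I_rhs_le x y xd zd M : 0 <= x -> 0 <= y -> 0 <= xd -> 0 <= zd -> xd <= M ->
  I_rhs x y xd zd <= - mu * (y - (b / alpha * M + a * Tmax / 4) / mu).
Proof.
  intros Hx Hy Hxd Hzd HM. unfold I_rhs.
  assert (L := logistic_le a Tmax y x Ha HTmax Hy Hx).
  replace (y + x) with (x + y) in L by ring.
  assert (Hinc := incidence_le_saturated b alpha xd zd ltac:(lra) Halpha Hxd Hzd).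
  assert (b * xd / alpha <= b / alpha * M).
  { replace (b * xd / alpha) with (b / alpha * xd) by (field; lra).
    apply Rmult_le_compat_l; [left; apply Rdiv_lt_0_compat|]; lra. }
  assert (- mu * (y - (b / alpha * M + a * Tmax / 4) / mu) = b / alpha * M + a * Tmax / 4 - mu * y)
    by (field; lra).
  lra.
Qed.

Lemma I_rhs_ge_linear x y xd zd M : 0 <= x -> 0 <= y -> 0 <= xd -> 0 <= zd -> x + y <= M ->
  - (a * M / Tmax + mu) * y <= I_rhs x y xd zd.
Proof.
  intros Hx Hy Hxd Hzd HM. unfold I_rhs.
  assert (Hinc := incidence_nonneg b alpha xd zd ltac:(lra) ltac:(lra) Hxd Hzd).
  assert (a / Tmax * (y * (x + y)) <= a / Tmax * (y * M))
    by (apply Rmult_le_compat_l; [left; apply Rdiv_lt_0_compat; lra|apply Rmult_le_compat_l; lra]).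
  assert (a * y * (1 - (x + y) / Tmax) = a * y - a / Tmax * (y * (x + y))) by (field; lra).
  assert ((a * M / Tmax + mu) * y = a / Tmax * (y * M) + mu * y) by (field; lra).
  assert (0 <= a * y) by nra.
  lra.
Qed.

(* From [T' <= s + a Tmax / 4 - d T], then [I' <= b MT / alpha + a Tmax / 4 - mu I],
   then [V' <= p MI - c V]. *)
Definition MT := (s + a * Tmax / 4) / d + 1.
Definition MI := (b / alpha * MT + a * Tmax / 4) / mu + 1.
Definition MV := p * MI / c + 1.
Definition KI := a * (MT + MI) / Tmax + mu.
Definition KT := d + a * (MT + MI) / Tmax + b * MV.

Lemma MT_pos : 0 < MT.
Proof. unfold MT. assert (0 < (s + a * Tmax / 4) / d) by (apply Rdiv_lt_0_compat; nra). lra. Qed.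

Lemma MI_pos : 0 < MI.
Proof.
  assert (H := MT_pos). unfold MI.
  assert (0 < b / alpha * MT) by (apply Rmult_lt_0_compat; [apply Rdiv_lt_0_compat|]; lra).
  assert (0 < (b / alpha * MT + a * Tmax / 4) / mu) by (apply Rdiv_lt_0_compat; nra). lra.
Qed.

Lemma MV_pos : 0 < MV.
Proof.
  assert (H := MI_pos). unfold MV.
  assert (0 < p * MI / c) by (apply Rdiv_lt_0_compat; nra). lra.
Qed.

Lemma KI_pos : 0 < KI.
Proof.
  assert (H1 := MT_pos). assert (H2 := MI_pos). unfold KI.
  assert (0 < a * (MT + MI) / Tmax) by (apply Rdiv_lt_0_compat; nra). lra.
Qed.

Lemma KT_pos : 0 < KT.
Proof.
  assert (H1 := MT_pos). assert (H2 := MI_pos). assert (H3 := MV_pos). unfold KT.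
  assert (0 < a * (MT + MI) / Tmax) by (apply Rdiv_lt_0_compat; nra).
  assert (0 < b * MV) by (apply Rmult_lt_0_compat; lra). lra.
Qed.

(* While [I < h], [T] stays within [Cc h] of [Teq] and [V <= kV h], so [(I, V)]
   dominates the linear delay system with incidence [Ah] and loss rate [mh]; [gap > 0] is
   [R0 > 1], and [h] is small enough that [mh c < Ah p] still holds. *)
Definition m0 := mu - a * (1 - Teq / Tmax).
Definition rho := sqrt_disc - a * Teq / Tmax.
Definition kV := p / c + 1.
Definition Cc := 2 * (a / Tmax + b * kV) * Teq / rho + 1.
Definition gap := b * p * Teq - m0 * c.
Definition Qc := 2 * a * c / Tmax + m0 * c * alpha * kV + 2 * a * c * alpha * kV / Tmax.
Definition h := Rmin 1 (gap / (2 * (Qc + b * p * Cc))).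
Definition Ah := b * (Teq - Cc * h) / (1 + alpha * kV * h).
Definition mh := m0 + 2 * a * h / Tmax.
Definition lam := char_rate mh c (Ah * p) tau.

Lemma m0_pos : 0 < m0.
Proof.
  assert (H := T0_ratio). destruct sqrt_disc_spec as (_ & H1 & _). unfold m0.
  assert (a * (1 - Teq / Tmax) = a - a * Teq / Tmax) by (field; lra). lra.
Qed.

Lemma rho_pos : 0 < rho.
Proof. assert (H := T0_ratio). destruct sqrt_disc_spec as (_ & H1 & _). unfold rho. lra. Qed.

Lemma kV_pos : 0 < kV.
Proof. unfold kV. assert (0 < p / c) by (apply Rdiv_lt_0_compat; lra). lra. Qed.

Lemma Cc_pos : 0 < Cc.
Proof.
  assert (H1 := T0_pos). assert (H2 := rho_pos). assert (H3 := kV_pos). unfold Cc.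
  assert (0 < a / Tmax) by (apply Rdiv_lt_0_compat; lra).
  assert (0 < 2 * (a / Tmax + b * kV) * Teq / rho)
    by (apply Rdiv_lt_0_compat; [apply Rmult_lt_0_compat; [|lra]; nra|lra]).
  lra.
Qed.

Lemma gap_pos : 0 < gap.
Proof.
  unfold gap, m0. unfold basic_repr_R0 in HR0.
  assert (H : b * p * Teq / c + a * (1 - Teq / Tmax) > mu).
  { apply (Rmult_gt_compat_l mu) in HR0; [|exact Hmu].
    rewrite <- Rmult_assoc, Rinv_r, Rmult_1_l, Rmult_1_r in HR0; lra. }
  assert (b * p * Teq / c * c = b * p * Teq) by (field; lra). nra.
Qed.

Lemma Qc_pos : 0 < Qc.
Proof.
  assert (H1 := m0_pos). assert (H2 := kV_pos). unfold Qc.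
  assert (0 < 2 * a * c / Tmax) by (apply Rdiv_lt_0_compat; nra).
  assert (0 < 2 * a * c * alpha * kV / Tmax)
    by (apply Rdiv_lt_0_compat; [repeat apply Rmult_lt_0_compat|]; lra).
  assert (0 < m0 * c * alpha * kV) by (repeat apply Rmult_lt_0_compat; lra). lra.
Qed.

Lemma h_spec : 0 < h /\ h <= 1 /\ h * (Qc + b * p * Cc) <= gap / 2.
Proof.
  assert (H1 := gap_pos). assert (H2 := Qc_pos). assert (H3 := Cc_pos).
  assert (0 < b * p * Cc) by (repeat apply Rmult_lt_0_compat; lra).
  assert (Hq : gap / (2 * (Qc + b * p * Cc)) * (Qc + b * p * Cc) = gap / 2) by (field; lra).
  assert (0 < gap / (2 * (Qc + b * p * Cc))) by (apply Rdiv_lt_0_compat; lra).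
  unfold h. apply Rmin_case_strong; intro Hle; repeat split; try lra.
  apply (Rmult_le_compat_r (Qc + b * p * Cc)) in Hle; lra.
Qed.

Lemma Cc_h_lt_T0 : Cc * h < Teq.
Proof.
  destruct h_spec as (Hh0 & _ & Hh). assert (H1 := m0_pos). assert (H2 := Qc_pos).
  assert (0 < m0 * c) by (apply Rmult_lt_0_compat; lra).
  assert (0 <= h * Qc) by (apply Rmult_le_pos; lra).
  assert (H3 := gap_pos).
  assert (Hlt : b * p * (Cc * h) < b * p * Teq) by (unfold gap in *; lra).
  apply Rmult_lt_reg_l in Hlt; [lra|]. apply Rmult_lt_0_compat; lra.
Qed.

Lemma Ah_pos : 0 < Ah.
Proof.
  destruct h_spec as (Hh0 & _ & _). assert (H1 := Cc_h_lt_T0). assert (H2 := kV_pos).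
  unfold Ah. assert (0 < alpha * kV * h) by (repeat apply Rmult_lt_0_compat; lra).
  apply Rdiv_lt_0_compat; [apply Rmult_lt_0_compat|]; lra.
Qed.

Lemma mh_pos : 0 < mh.
Proof.
  destruct h_spec as (Hh0 & _ & _). assert (H := m0_pos). unfold mh.
  assert (0 < 2 * a * h / Tmax) by (apply Rdiv_lt_0_compat; nra). lra.
Qed.

(* Clearing the denominator [1 + alpha kV h] leaves [gap] against terms of order [h],
   and [h ^ 2 <= h]. *)
Lemma mh_c_lt_Ah_p : mh * c < Ah * p.
Proof.
  destruct h_spec as (Hh0 & Hh1 & Hh). assert (H1 := kV_pos). assert (H2 := m0_pos).
  assert (Hden : 0 < 1 + alpha * kV * h) by (assert (0 < alpha * kV * h) by
    (repeat apply Rmult_lt_0_compat; lra); lra).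
  unfold Ah, mh. apply (Rmult_lt_reg_r (1 + alpha * kV * h)); [exact Hden|].
  replace (b * (Teq - Cc * h) / (1 + alpha * kV * h) * p * (1 + alpha * kV * h))
    with (b * p * Teq - h * (b * p * Cc)) by (field; lra).
  replace ((m0 + 2 * a * h / Tmax) * c * (1 + alpha * kV * h))
    with (m0 * c + h * (Qc - 2 * a * c * alpha * kV / Tmax)
          + h * h * (2 * a * c * alpha * kV / Tmax)) by (unfold Qc; field; lra).
  assert (0 < 2 * a * c * alpha * kV / Tmax)
    by (apply Rdiv_lt_0_compat; [repeat apply Rmult_lt_0_compat|]; lra).
  assert (h * h * (2 * a * c * alpha * kV / Tmax) <= h * (2 * a * c * alpha * kV / Tmax))
    by (apply Rmult_le_compat_r; nra).
  assert (H3 := gap_pos). unfold gap in *. lra.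
Qed.

Lemma lam_spec : 0 < lam /\ (lam + mh) * (lam + c) <= Ah * p * exp (- lam * tau).
Proof.
  apply char_rate_spec; [apply mh_pos|exact Hc|apply mh_c_lt_Ah_p|exact Htau].
Qed.

Lemma T_rhs_ge_below_T0 x y z : 0 <= x <= Teq - Cc * h -> 0 <= y < h -> 0 <= z <= kV * h ->
  h * rho <= T_rhs x y z.
Proof.
  intros Hx Hy Hz. destruct h_spec as (Hh0 & _ & _).
  assert (H1 := Cc_pos). assert (H2 := rho_pos). assert (H3 := kV_pos). assert (H4 := T0_pos).
  assert (Hak : 0 < a / Tmax) by (apply Rdiv_lt_0_compat; lra).
  assert (HCh : 0 < Cc * h) by (apply Rmult_lt_0_compat; lra).
  unfold T_rhs. set (e := Teq - x).
  assert (Hfree : s - d * x + a * x * (1 - x / Tmax) = e * (sqrt_disc - a / Tmax * e))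
    by (rewrite free_T_rhs_expand; unfold e; ring).
  assert (Hslope : rho <= sqrt_disc - a / Tmax * e).
  { unfold rho. replace (a * Teq / Tmax) with (a / Tmax * Teq) by (field; lra).
    assert (a / Tmax * e <= a / Tmax * Teq) by (apply Rmult_le_compat_l; unfold e; lra). lra. }
  assert (Hgain : Cc * h * rho <= e * (sqrt_disc - a / Tmax * e))
    by (apply Rmult_le_compat; unfold e in *; nra).
  assert (HCc : Cc * h * rho = 2 * (a / Tmax + b * kV) * Teq * h + h * rho)
    by (unfold Cc; field; lra).
  assert (Hinf := incidence_le_mass_action b alpha x z ltac:(lra) ltac:(lra) ltac:(lra) ltac:(lra)).
  assert (Hxy : a / Tmax * (x * y) <= a / Tmax * (Teq * h))
    by (apply Rmult_le_compat_l; [lra|apply Rmult_le_compat; lra]).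
  assert (Hxz : b * x * z <= b * kV * Teq * h).
  { replace (b * x * z) with (b * (x * z)) by ring.
    replace (b * kV * Teq * h) with (b * (Teq * (kV * h))) by ring.
    apply Rmult_le_compat_l; [lra|apply Rmult_le_compat; lra]. }
  assert (a * x * (1 - (x + y) / Tmax) = a * x * (1 - x / Tmax) - a / Tmax * (x * y))
    by (field; lra).
  assert (0 <= (a / Tmax + b * kV) * Teq * h)
    by (apply Rmult_le_pos; [apply Rmult_le_pos|]; nra).
  lra.
Qed.

Lemma I_rhs_ge_window x y xd zd : 0 <= x <= Teq + h -> 0 <= y < h ->
  Teq - Cc * h <= xd -> 0 <= zd <= kV * h -> Ah * zd - mh * y <= I_rhs x y xd zd.
Proof.
  intros Hx Hy Hxd Hzd. destruct h_spec as (Hh0 & _ & _).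
  assert (H1 := Cc_h_lt_T0). assert (H2 := kV_pos).
  unfold I_rhs.
  assert (Hinc : Ah * zd <= b * xd * zd / (1 + alpha * zd)).
  { assert (Hden : 0 < 1 + alpha * (kV * h)) by nra.
    eapply Rle_trans; [|apply (incidence_ge_of_le b alpha xd zd (kV * h)); lra].
    unfold Ah. replace (b * (Teq - Cc * h) / (1 + alpha * kV * h) * zd)
      with (b * (Teq - Cc * h) * zd / (1 + alpha * (kV * h))) by (field; lra).
    apply Rmult_le_compat_r; [left; apply Rinv_0_lt_compat; lra|].
    apply Rmult_le_compat_r; [lra|]. apply Rmult_le_compat_l; lra. }
  assert (Hlog : 0 <= y * (a / Tmax) * (Teq + 2 * h - (x + y)))
    by (apply Rmult_le_pos; [apply Rmult_le_pos; [lra|left; apply Rdiv_lt_0_compat]|]; lra).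
  assert (a * y * (1 - (x + y) / Tmax) - mu * y + mh * y
          = y * (a / Tmax) * (Teq + 2 * h - (x + y))) by (unfold mh, m0; field; lra).
  lra.
Qed.

(* After [warmup] inside a window where [I < h], [V <= kV h] and
   [Teq - Cc h <= T <= Teq + h]; meanwhile [I] cannot decay below [I_floor]. *)
Definition V_settle := decay_time MV h c.
Definition T_settle := decay_time MT h sqrt_disc.
Definition warmup := V_settle + T_settle + Teq / (h * rho) + 1.
Definition I_floor i := i * exp (- KI * (warmup + tau)).
Definition V_floor i := p * I_floor i / c * (1 - exp (- c)).
(* An exponential solution [(u, v) exp (lam t)] of the comparison system starting
   below the floors of [I] and [V]. *)
Definition v_seed i := Rmin (V_floor i) (p * I_floor i / (lam + c)) / 2.
Definition u_seed i := (lam + c) * v_seed i / p.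
Definition window i := warmup + tau + h / (u_seed i * lam).

Lemma warmup_spec : 0 <= V_settle /\ 0 <= T_settle /\ 0 < Teq / (h * rho) /\
  warmup = V_settle + T_settle + Teq / (h * rho) + 1.
Proof.
  destruct h_spec as (Hh0 & _ & _). assert (H1 := rho_pos). assert (H2 := T0_pos).
  split; [apply decay_time_nonneg; lra|].
  split; [apply decay_time_nonneg; [lra|apply sqrt_disc_pos]|].
  split; [apply Rdiv_lt_0_compat; [|apply Rmult_lt_0_compat]; lra|reflexivity].
Qed.

Lemma seed_spec i : 0 < i ->
  0 < v_seed i /\ v_seed i < V_floor i /\ 0 < u_seed i /\ u_seed i < I_floor i /\
  p * u_seed i = (lam + c) * v_seed i.
Proof.
  intro Hi. destruct lam_spec as [Hl _].
  assert (HI : 0 < I_floor i) by (apply Rmult_lt_0_compat; [exact Hi|apply exp_pos]).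
  assert (Hec : 0 < 1 - exp (- c)) by (assert (exp (- c) < exp 0) by
    (apply exp_increasing; lra); rewrite exp_0 in *; lra).
  assert (HV : 0 < V_floor i)
    by (apply Rmult_lt_0_compat; [apply Rdiv_lt_0_compat; [apply Rmult_lt_0_compat|]|]; lra).
  assert (HpI : 0 < p * I_floor i / (lam + c))
    by (apply Rdiv_lt_0_compat; [apply Rmult_lt_0_compat|]; lra).
  assert (Hv : 0 < v_seed i /\ v_seed i < V_floor i /\
               v_seed i <= p * I_floor i / (lam + c) / 2).
  { unfold v_seed. apply Rmin_case_strong; intro; repeat split; lra. }
  destruct Hv as (Hv0 & Hv1 & Hv2).
  assert (Hu : u_seed i <= I_floor i / 2).
  { unfold u_seed. apply (Rmult_le_reg_l (p / (lam + c))); [apply Rdiv_lt_0_compat; lra|].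
    replace (p / (lam + c) * ((lam + c) * v_seed i / p)) with (v_seed i) by (field; lra).
    replace (p / (lam + c) * (I_floor i / 2)) with (p * I_floor i / (lam + c) / 2)
      by (field; lra).
    exact Hv2. }
  repeat split; try lra.
  - unfold u_seed. apply Rdiv_lt_0_compat; [apply Rmult_lt_0_compat|]; lra.
  - unfold u_seed. field. lra.
Qed.

Lemma seed_char i : 0 < i -> (lam + mh) * u_seed i <= Ah * v_seed i * exp (- lam * tau).
Proof.
  intro Hi. destruct lam_spec as [Hl Hchar].
  destruct (seed_spec i Hi) as (Hv0 & _ & _ & _ & Huv).
  apply (Rmult_le_reg_r p); [exact Hp|].
  assert (Hpu : (lam + mh) * u_seed i * p = (lam + mh) * (lam + c) * v_seed i)
    by (transitivity ((lam + mh) * (p * u_seed i)); [ring|rewrite Huv; ring]).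
  rewrite Hpu.
  replace (Ah * v_seed i * exp (- lam * tau) * p) with (Ah * p * exp (- lam * tau) * v_seed i)
    by ring.
  apply Rmult_le_compat_r; lra.
Qed.

Lemma seed_exceeds_h i : 0 < i -> h < u_seed i * exp (lam * (h / (u_seed i * lam))).
Proof.
  intro Hi. destruct h_spec as (Hh0 & _ & _). destruct lam_spec as [Hl _].
  destruct (seed_spec i Hi) as (_ & _ & Hu & _).
  replace (lam * (h / (u_seed i * lam))) with (h / u_seed i) by (field; lra).
  assert (E := exp_ineq1_le (h / u_seed i)).
  assert (u_seed i * (1 + h / u_seed i) <= u_seed i * exp (h / u_seed i))
    by (apply Rmult_le_compat_l; lra).
  assert (u_seed i * (1 + h / u_seed i) = u_seed i + h) by (field; lra).
  lra.
Qed.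

Definition eta_T := s / KT * (1 - exp (- KT)).
Definition eta_I := Rmin h (h * exp (- KI * window h)).
Definition eta_V := p * eta_I / c * (1 - exp (- c)).

Section Solution.

Variables T I V : R -> R.
Hypothesis Hini : positive_initial_data tau T I V.
Hypothesis Hsol : is_solution s d a Tmax b alpha mu p c tau T I V.

Local Notation dT := (fun w => T_rhs (T w) (I w) (V w)).
Local Notation dI := (fun w => I_rhs (T w) (I w) (T (w - tau)) (V (w - tau))).
Local Notation dV := (fun w => V_rhs (I w) (V w)).

Lemma T_deriv t : 0 < t -> derivable_pt_lim T t (T_rhs (T t) (I t) (V t)).
Proof. intro Ht. destruct Hsol as (_ & _ & _ & Hder). apply (Hder t Ht). Qed.

Lemma I_deriv t : 0 < t ->
  derivable_pt_lim I t (I_rhs (T t) (I t) (T (t - tau)) (V (t - tau))).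
Proof. intro Ht. destruct Hsol as (_ & _ & _ & Hder). apply (Hder t Ht). Qed.

Lemma V_deriv t : 0 < t -> derivable_pt_lim V t (V_rhs (I t) (V t)).
Proof. intro Ht. destruct Hsol as (_ & _ & _ & Hder). apply (Hder t Ht). Qed.

Lemma solution_continuous t : 0 < t ->
  continuity_pt T t /\ continuity_pt I t /\ continuity_pt V t.
Proof.
  intro Ht. repeat split; eapply continuity_pt_of_derivable_pt_lim;
    [apply T_deriv|apply I_deriv|apply V_deriv]; exact Ht.
Qed.

Lemma solution_pos_near_zero : exists e, 0 < e /\
  forall t, -tau <= t <= e -> 0 < T t /\ 0 < I t /\ 0 < V t.
Proof.
  destruct Hini as (_ & _ & _ & Hinit). destruct Hsol as (HcT & HcI & HcV & _).
  assert (Hright : forall f, cont_on_from tau f -> 0 < f 0 ->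
            exists e, 0 < e /\ forall t, 0 <= t <= e -> 0 < f t).
  { intros f Hf Hf0. destruct (Hf 0 ltac:(lra) (f 0 / 2) ltac:(lra)) as [e [He Hx]].
    exists (e / 2). split; [lra|]. intros t Ht. specialize (Hx t ltac:(lra)).
    rewrite Rminus_0_r, Rabs_right in Hx by lra. specialize (Hx ltac:(lra)).
    apply Rabs_def2 in Hx. lra. }
  destruct (Hinit 0 ltac:(lra)) as (HT0 & HI0 & HV0).
  destruct (Hright T HcT HT0) as [e1 [He1 H1]].
  destruct (Hright I HcI HI0) as [e2 [He2 H2]].
  destruct (Hright V HcV HV0) as [e3 [He3 H3]].
  exists (Rmin e1 (Rmin e2 e3)). split; [repeat apply Rmin_pos; assumption|].
  intros t Ht. destruct (Rle_dec t 0); [apply Hinit; lra|].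
  assert (Rmin e1 (Rmin e2 e3) <= e1) by apply Rmin_l.
  assert (Rmin e1 (Rmin e2 e3) <= e2) by (eapply Rle_trans; [apply Rmin_r|apply Rmin_l]).
  assert (Rmin e1 (Rmin e2 e3) <= e3) by (eapply Rle_trans; [apply Rmin_r|apply Rmin_r]).
  repeat split; [apply H1|apply H2|apply H3]; lra.
Qed.

(* On [[e, s0]] the solution is bounded, so each component obeys [F' >= - K F] and
   cannot reach zero at [s0]. *)
Lemma solution_pos_propagates e s0 : 0 < e < s0 ->
  (forall u, -tau <= u < s0 -> 0 < T u /\ 0 < I u /\ 0 < V u) ->
  0 < T s0 /\ 0 < I s0 /\ 0 < V s0.
Proof.
  intros He Hpos.
  destruct (continuity_ab_maj (fun u => T u + I u + V u) e s0 ltac:(lra)) as [umax [Hmax _]].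
  { intros u Hu. destruct (solution_continuous u ltac:(lra)) as (C1 & C2 & C3).
    repeat apply continuity_pt_plus; assumption. }
  set (M := T umax + I umax + V umax) in *.
  assert (HM : forall u, e < u < s0 -> T u + I u <= M /\ V u <= M).
  { intros u Hu. specialize (Hmax u ltac:(lra)).
    destruct (Hpos u ltac:(lra)) as (P1 & P2 & P3). lra. }
  destruct (Hpos e ltac:(lra)) as (Pe1 & Pe2 & Pe3).
  split; [|split].
  - apply (gronwall_pos T dT (d + a * M / Tmax + b * M) e s0 ltac:(lra)
             ltac:(intros; apply T_deriv; lra)); [|exact Pe1].
    intros u Hu. destruct (Hpos u ltac:(lra)) as (P1 & P2 & P3). destruct (HM u Hu).
    assert (HT := T_rhs_ge_linear (T u) (I u) (V u) M M); lra.
  - apply (gronwall_pos I dI (a * M / Tmax + mu) e s0 ltac:(lra)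
             ltac:(intros; apply I_deriv; lra)); [|exact Pe2].
    intros u Hu. destruct (Hpos u ltac:(lra)) as (P1 & P2 & P3). destruct (HM u Hu).
    destruct (Hpos (u - tau) ltac:(lra)) as (Q1 & Q2 & Q3).
    apply I_rhs_ge_linear; lra.
  - apply (gronwall_pos V dV c e s0 ltac:(lra) ltac:(intros; apply V_deriv; lra)); [|exact Pe3].
    intros u Hu. destruct (Hpos u ltac:(lra)) as (P1 & P2 & P3).
    unfold V_rhs. assert (0 <= p * I u) by (apply Rmult_le_pos; lra). lra.
Qed.

Lemma solution_pos t : -tau <= t -> 0 < T t /\ 0 < I t /\ 0 < V t.
Proof.
  destruct solution_pos_near_zero as [e [He Hnear]].
  intro Ht. destruct (Rle_dec t e) as [|Hte]; [apply Hnear; lra|].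
  set (phi := fun u => Rmin (T u) (Rmin (I u) (V u))).
  assert (Hsplit : forall u, 0 < phi u -> 0 < T u /\ 0 < I u /\ 0 < V u)
    by (intro u; unfold phi; repeat apply Rmin_case_strong; intros; lra).
  assert (Hjoin : forall u, 0 < T u /\ 0 < I u /\ 0 < V u -> 0 < phi u)
    by (intros u (P1 & P2 & P3); unfold phi; repeat apply Rmin_pos; assumption).
  apply Hsplit. apply (pos_by_continuous_induction phi e t); [| |intros s0 Hs0 Hbef|lra].
  - intros u Hu. destruct (solution_continuous u ltac:(lra)) as (C1 & C2 & C3).
    apply continuity_pt_Rmin; [|apply continuity_pt_Rmin]; assumption.
  - apply Hjoin, Hnear. lra.
  - apply Hjoin, (solution_pos_propagates e s0); [lra|].
    intros u Hu. destruct (Rle_dec u e); [apply Hnear; lra|apply Hsplit, Hbef; lra].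
Qed.

Lemma eventually_bounded : exists tB, 0 < tB /\
  forall t, tB <= t -> T t <= MT /\ I t <= MI /\ V t <= MV.
Proof.
  destruct (eventually_le_of_decay T dT d ((s + a * Tmax / 4) / d) 1 1 Hd ltac:(lra))
    as [tT [HtT HTb]]; [intros; apply T_deriv; lra| |].
  { intros w Hw. destruct (solution_pos w ltac:(lra)) as (P1 & P2 & P3).
    apply T_rhs_le_logistic; lra. }
  destruct (eventually_le_of_decay I dI mu ((b / alpha * MT + a * Tmax / 4) / mu) 1 (tT + tau)
              Hmu ltac:(lra)) as [tI [HtI HIb]]; [intros; apply I_deriv; lra| |].
  { intros w Hw. destruct (solution_pos w ltac:(lra)) as (P1 & P2 & P3).
    destruct (solution_pos (w - tau) ltac:(lra)) as (Q1 & Q2 & Q3).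
    apply I_rhs_le; try lra. apply HTb. lra. }
  destruct (eventually_le_of_decay V dV c (p * MI / c) 1 tI Hc ltac:(lra))
    as [tV [HtV HVb]]; [intros; apply V_deriv; lra| |].
  { intros w Hw. unfold V_rhs.
    assert (I w <= MI) by (apply HIb; lra).
    assert (- c * (V w - p * MI / c) = p * MI - c * V w) by (field; lra).
    assert (p * I w <= p * MI) by (apply Rmult_le_compat_l; lra). lra. }
  exists tV. split; [lra|]. intros t Ht.
  split; [apply HTb; lra|split; [apply HIb; lra|apply HVb; lra]].
Qed.

Lemma V_ge_of_I_ge j t0 t1 : 0 <= j -> 0 < t0 -> (forall t, t0 <= t <= t1 -> j <= I t) ->
  forall t, t0 + 1 <= t <= t1 -> p * j / c * (1 - exp (- c)) <= V t.
Proof.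
  intros Hj Ht0 HI t Ht.
  destruct (solution_pos t0 ltac:(lra)) as (_ & _ & P3).
  apply (ge_after_unit_time V dV c (p * j / c) t0 t); try lra.
  - apply Rmult_le_pos; [apply Rmult_le_pos|left; apply Rinv_0_lt_compat]; lra.
  - intros w Hw. apply V_deriv. lra.
  - intros w Hw. unfold V_rhs. assert (j <= I w) by (apply HI; lra).
    assert (- c * (V w - p * j / c) = p * j - c * V w) by (field; lra).
    assert (p * j <= p * I w) by (apply Rmult_le_compat_l; lra). lra.
Qed.

Section Bounded.

Variable tB : R.
Hypothesis HtB : 0 < tB.
Hypothesis Hbound : forall t, tB <= t -> T t <= MT /\ I t <= MI /\ V t <= MV.

Lemma T_eventually_ge t : tB + 1 <= t -> eta_T <= T t.
Proof.
  intro Ht. assert (HK := KT_pos).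
  destruct (solution_pos tB ltac:(lra)) as (P1 & _).
  apply (ge_after_unit_time T dT KT (s / KT) tB t); try lra.
  - left. apply Rdiv_lt_0_compat; lra.
  - intros w Hw. apply T_deriv. lra.
  - intros w Hw. destruct (solution_pos w ltac:(lra)) as (Q1 & Q2 & Q3).
    destruct (Hbound w ltac:(lra)) as (B1 & B2 & B3).
    assert (H := T_rhs_ge_linear (T w) (I w) (V w) (MT + MI) MV
                   ltac:(lra) ltac:(lra) ltac:(lra) ltac:(lra) B3).
    fold KT in H. assert (- KT * (T w - s / KT) = s - KT * T w) by (field; lra). lra.
Qed.

Lemma I_ge_decay t0 t : tB <= t0 <= t -> I t0 * exp (- KI * (t - t0)) <= I t.
Proof.
  intro Ht.
  enough ((I t0 - 0) * exp (- KI * (t - t0)) <= I t - 0) by lra.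
  apply (gronwall_lower I dI KI 0 t0 t ltac:(lra)).
  - intros w Hw. apply I_deriv. lra.
  - intros w Hw. destruct (solution_pos w ltac:(lra)) as (Q1 & Q2 & Q3).
    destruct (solution_pos (w - tau) ltac:(lra)) as (R1 & R2 & R3).
    destruct (Hbound w ltac:(lra)) as (B1 & B2 & B3).
    rewrite Rminus_0_r. apply I_rhs_ge_linear; lra.
Qed.

Section Window.

Variables ta i : R.
Hypothesis Hta : tB <= ta.
Hypothesis Hi : 0 < i.
Hypothesis Hia : i <= I ta.
Hypothesis Hwin : forall t, ta < t <= ta + window i -> I t < h.

Lemma window_spec : 0 < h / (u_seed i * lam) /\ window i = warmup + tau + h / (u_seed i * lam).
Proof.
  destruct h_spec as (Hh0 & _ & _). destruct lam_spec as [Hl _].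
  destruct (seed_spec i Hi) as (_ & _ & Hu & _).
  split; [apply Rdiv_lt_0_compat; [|apply Rmult_lt_0_compat]; lra|reflexivity].
Qed.

Lemma V_le_window t : ta + V_settle <= t <= ta + window i -> V t <= kV * h.
Proof.
  intro Ht. destruct h_spec as (Hh0 & _ & _).
  destruct (Hbound ta Hta) as (_ & _ & B3). destruct (solution_pos ta ltac:(lra)) as (_ & _ & P3).
  replace (kV * h) with (p * h / c + h) by (unfold kV; field; lra).
  apply (le_after_decay_time V dV c (p * h / c) MV h ta t Hc Hh0);
    [| |assert (0 <= p * h / c) by (apply Rmult_le_pos; [|left; apply Rinv_0_lt_compat]; nra);
        lra|unfold V_settle in Ht; lra].
  - intros w Hw. apply V_deriv. lra.
  - intros w Hw. unfold V_rhs. assert (I w < h) by (apply Hwin; lra).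
    assert (- c * (V w - p * h / c) = p * h - c * V w) by (field; lra).
    assert (p * I w <= p * h) by (apply Rmult_le_compat_l; lra). lra.
Qed.

Lemma T_le_window t : ta + T_settle <= t -> T t <= Teq + h.
Proof.
  intro Ht. destruct h_spec as (Hh0 & _ & _). assert (H0 := T0_pos).
  destruct (Hbound ta Hta) as (B1 & _ & _).
  apply (le_after_decay_time T dT sqrt_disc Teq MT h ta t sqrt_disc_pos Hh0);
    [| |lra|unfold T_settle in Ht; lra].
  - intros w Hw. apply T_deriv. lra.
  - intros w Hw. destruct (solution_pos w ltac:(lra)) as (P1 & P2 & P3).
    apply T_rhs_le_T0; lra.
Qed.

(* Below [Teq - Cc h] the T-equation pushes [T] up at rate at least [h rho]. *)
Lemma T_ge_window t : ta + V_settle + Teq / (h * rho) <= t <= ta + window i ->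
  Teq - Cc * h <= T t.
Proof.
  intro Ht. destruct h_spec as (Hh0 & _ & _). assert (H1 := rho_pos).
  assert (H2 := T0_pos). assert (H3 := Cc_pos). destruct warmup_spec as (HV & _ & HT0 & _).
  assert (Hk : 0 < h * rho) by (apply Rmult_lt_0_compat; lra).
  destruct (barrier_or_linear_growth T dT (ta + V_settle) (ta + window i) (Teq - Cc * h)
              (h * rho) Hk) with (t := t) as [|Hgrow]; [| |lra|assumption|].
  - intros w Hw. apply T_deriv. lra.
  - intros w Hw HTw. destruct (solution_pos w ltac:(lra)) as (P1 & P2 & P3).
    assert (I w < h) by (apply Hwin; lra).
    assert (V w <= kV * h) by (apply V_le_window; lra).
    apply T_rhs_ge_below_T0; lra.
  - destruct (solution_pos (ta + V_settle) ltac:(lra)) as (P1 & _).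
    assert (h * rho * (Teq / (h * rho)) = Teq) by (field; lra).
    assert (h * rho * (Teq / (h * rho)) <= h * rho * (t - (ta + V_settle)))
      by (apply Rmult_le_compat_l; lra).
    assert (0 < Cc * h) by (apply Rmult_lt_0_compat; lra). lra.
Qed.

Lemma I_ge_warmup t : ta <= t <= ta + warmup + tau -> I_floor i <= I t.
Proof.
  intro Ht. assert (H := KI_pos).
  assert (Hdecay := I_ge_decay ta t ltac:(lra)).
  assert (exp (- KI * (warmup + tau)) <= exp (- KI * (t - ta))) by (apply exp_le_compat; nra).
  unfold I_floor.
  assert (i * exp (- KI * (warmup + tau)) <= I ta * exp (- KI * (t - ta)))
    by (apply Rmult_le_compat; [lra|left; apply exp_pos|lra|lra]).
  lra.
Qed.

Lemma V_ge_warmup t : ta + 1 <= t <= ta + warmup + tau -> V_floor i <= V t.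
Proof.
  intro Ht. unfold V_floor.
  apply (V_ge_of_I_ge (I_floor i) ta (ta + warmup + tau)); [| |exact I_ge_warmup|lra].
  - left. apply Rmult_lt_0_compat; [exact Hi|apply exp_pos].
  - lra.
Qed.

(* After the warm-up, [(I, V)] dominates the exponential seed solution, which exceeds
   [h] before the window closes. *)
Lemma long_window_absurd : False.
Proof.
  destruct h_spec as (Hh0 & _ & _). destruct lam_spec as [Hl _].
  destruct (seed_spec i Hi) as (Hv0 & Hv1 & Hu0 & Hu1 & Huv).
  destruct window_spec as [Hlen Hwdef]. destruct warmup_spec as (HVs & HTs & HT0 & Hwu).
  assert (HA := Ah_pos). assert (H1 := Cc_h_lt_T0). assert (H2 := kV_pos).
  set (t2 := ta + warmup + tau). set (te := ta + window i).
  assert (Hexp : u_seed i * exp (lam * (te - t2)) < I te).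
  { eapply proj1.
    apply (delay_exp_comparison I V dI dV Ah mh p c tau lam (u_seed i) (v_seed i) t2 te);
      try lra.
    - intros w Hw. apply I_deriv. unfold t2 in Hw. lra.
    - intros w Hw. apply V_deriv. unfold t2 in Hw. lra.
    - intros w Hw. unfold t2, te in Hw.
      destruct (solution_pos w ltac:(lra)) as (P1 & P2 & P3).
      destruct (solution_pos (w - tau) ltac:(lra)) as (Q1 & Q2 & Q3).
      assert (I w < h) by (apply Hwin; lra).
      assert (T w <= Teq + h) by (apply T_le_window; lra).
      assert (Teq - Cc * h <= T (w - tau)) by (apply T_ge_window; lra).
      assert (V (w - tau) <= kV * h) by (apply V_le_window; lra).
      apply I_rhs_ge_window; lra.
    - intros w Hw. unfold V_rhs. lra.
    - intros w Hw. unfold t2 in Hw.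
      assert (exp (lam * (w - t2)) <= 1)
        by (rewrite <- exp_0; apply exp_le_compat; unfold t2; nra).
      assert (V_floor i <= V w) by (apply V_ge_warmup; lra). nra.
    - apply seed_char, Hi.
    - assert (I_floor i <= I t2) by (apply I_ge_warmup; unfold t2; lra). lra.
    - assert (V_floor i <= V t2) by (apply V_ge_warmup; unfold t2; lra). lra.
    - unfold te, t2. lra. }
  assert (Hte : I te < h) by (apply Hwin; unfold te; lra).
  replace (te - t2) with (h / (u_seed i * lam)) in Hexp by (unfold te, t2; rewrite Hwdef; ring).
  assert (Hbig := seed_exceeds_h i Hi). lra.
Qed.

End Window.

End Bounded.

(* Each time [I] drops below [h] it climbs back within [window h], having decayed at
   most at rate [KI] meanwhile. *)
Lemma I_eventually_ge : exists t1, 0 < t1 /\ forall t, t1 <= t -> eta_I <= I t.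
Proof.
  destruct eventually_bounded as [tB [HtB Hbound]].
  destruct h_spec as (Hh0 & _ & _). assert (HK := KI_pos).
  destruct (solution_pos tB ltac:(lra)) as (_ & PI & _).
  assert (Hexit : exists ts, tB < ts /\ h <= I ts).
  { apply NNPP. intro Hn. apply (long_window_absurd tB HtB Hbound tB (I tB)); try lra.
    intros t Ht. apply Rnot_le_lt. intro Hge. apply Hn. exists t. split; lra. }
  destruct Hexit as [ts [Hts Hhts]].
  exists ts. split; [lra|]. intros t Ht.
  assert (Hmin : eta_I <= h /\ eta_I <= h * exp (- KI * window h))
    by (split; [apply Rmin_l|apply Rmin_r]).
  destruct (Rle_dec h (I t)) as [|Hlt]; [lra|]. apply Rnot_le_lt in Hlt.
  destruct (last_time_above I ts t h) as [s0 [Hs0 [Hhs0 Hafter]]];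
    [destruct (Req_dec ts t) as [<-|]; lra| |exact Hhts|exact Hlt|].
  { intros w Hw. apply solution_continuous. lra. }
  destruct (Rle_dec (t - s0) (window h)) as [Hshort|Hlong].
  - assert (Hdecay := I_ge_decay tB HtB Hbound s0 t ltac:(lra)).
    assert (exp (- KI * window h) <= exp (- KI * (t - s0))) by (apply exp_le_compat; nra).
    assert (h * exp (- KI * window h) <= I s0 * exp (- KI * (t - s0)))
      by (apply Rmult_le_compat; [lra|left; apply exp_pos|lra|lra]).
    lra.
  - exfalso. apply (long_window_absurd tB HtB Hbound s0 h); try lra.
    intros u Hu. apply Hafter. lra.
Qed.

End Solution.

Lemma dissipative : exists M, forall T I V,
  positive_initial_data tau T I V -> is_solution s d a Tmax b alpha mu p c tau T I V ->
  exists t0, forall t, t0 <= t -> T t <= M /\ I t <= M /\ V t <= M.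
Proof.
  exists (MT + MI + MV). intros T I V Hini Hsol.
  assert (H1 := MT_pos). assert (H2 := MI_pos). assert (H3 := MV_pos).
  destruct (eventually_bounded T I V Hini Hsol) as [tB [_ Hbound]].
  exists tB. intros t Ht. destruct (Hbound t Ht) as (B1 & B2 & B3). lra.
Qed.

Lemma uniformly_persistent : exists eta, 0 < eta /\ forall T I V,
  positive_initial_data tau T I V -> is_solution s d a Tmax b alpha mu p c tau T I V ->
  liminf_ge T eta /\ liminf_ge I eta /\ liminf_ge V eta.
Proof.
  destruct h_spec as (Hh0 & _ & _). assert (HK := KT_pos).
  assert (HeT : 0 < eta_T).
  { assert (exp (- KT) < exp 0) by (apply exp_increasing; lra). rewrite exp_0 in *.
    apply Rmult_lt_0_compat; [apply Rdiv_lt_0_compat|]; lra. }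
  assert (HeI : 0 < eta_I)
    by (apply Rmin_pos; [lra|apply Rmult_lt_0_compat; [lra|apply exp_pos]]).
  assert (HeV : 0 < eta_V).
  { assert (exp (- c) < exp 0) by (apply exp_increasing; lra). rewrite exp_0 in *.
    apply Rmult_lt_0_compat; [apply Rdiv_lt_0_compat; [apply Rmult_lt_0_compat|]|]; lra. }
  exists (Rmin eta_T (Rmin eta_I eta_V)).
  split; [apply Rmin_pos; [|apply Rmin_pos]; assumption|]. intros T I V Hini Hsol.
  assert (Hm1 : Rmin eta_T (Rmin eta_I eta_V) <= eta_T) by apply Rmin_l.
  assert (Hm2 : Rmin eta_T (Rmin eta_I eta_V) <= eta_I)
    by (eapply Rle_trans; [apply Rmin_r|apply Rmin_l]).
  assert (Hm3 : Rmin eta_T (Rmin eta_I eta_V) <= eta_V)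
    by (eapply Rle_trans; [apply Rmin_r|apply Rmin_r]).
  destruct (eventually_bounded T I V Hini Hsol) as [tB [HtB Hbound]].
  destruct (I_eventually_ge T I V Hini Hsol) as [t1 [Ht1 HI]].
  split; [|split].
  - apply (liminf_ge_of_eventually T eta_T); [exact Hm1|].
    exists (tB + 1). intros t Ht. apply (T_eventually_ge T I V Hini Hsol tB); assumption.
  - apply (liminf_ge_of_eventually I eta_I); [exact Hm2|]. exists t1. exact HI.
  - apply (liminf_ge_of_eventually V eta_V); [exact Hm3|].
    exists (t1 + 1). intros t Ht.
    apply (V_ge_of_I_ge T I V Hini Hsol eta_I t1 t); [lra|lra| |lra].
    intros w Hw. apply HI. lra.
Qed.
End Model.

Theorem theorem7 (s d a Tmax b alpha mu p c tau : R) :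
  0 < s -> 0 < d -> 0 < a -> 0 < Tmax -> 0 < b -> 0 < alpha ->
  0 < mu -> 0 < p -> 0 < c -> d <= mu -> 0 <= tau ->
  basic_repr_R0 s d a Tmax b mu p c > 1 ->
  permanent s d a Tmax b alpha mu p c tau.
Proof.
  intros Hs Hd Ha HTmax Hb Halpha Hmu Hp Hc Hdmu Htau HR0.
  destruct (dissipative s d a Tmax b alpha mu p c tau
              Hs Hd Ha HTmax Hb Halpha Hmu Hp Hc Htau) as [M HM].
  destruct (uniformly_persistent s d a Tmax b alpha mu p c tau
              Hs Hd Ha HTmax Hb Halpha Hmu Hp Hc Hdmu Htau HR0) as [eta [Heta Hpers]].
  exists M, eta. split; [exact Heta|]. intros T I V Hini Hsol.
  split; [exact (HM T I V Hini Hsol)|exact (Hpers T I V Hini Hsol)].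
Qed.
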